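(* Let $\mathfrak a=\mathbb H^p$ and $V=\mathrm{Span}(J_1,J_2)$ with $J_1=\mathrm{diag}(L_{a_1},\dots,L_{a_p})$, $J_2=\mathrm{diag}(L_{b_1},\dots,L_{b_p})$, where $a_s,b_s\in\mathrm{Im}\,\mathbb H$ are linearly independent for each $s$. Then for every inner product on $V$, $(V,\langle\cdot,\cdot\rangle)$ is a WS-pair. More precisely, there is $P=\mathrm{diag}(L_{q_1},\dots,L_{q_p})$ with unit $q_s\in \mathrm{Im}\,\mathbb H$ such that $PJP^{-1}=-J$ for all $J\in V$, and for every $X\in\mathfrak a$ there is $Q=\mathrm{diag}(R_{r_1},\dots,R_{r_p})$ with unit $r_s\in\mathbb H$ such that $N=QP$ satisfies $NX=-X$ and $NJ=-JN$ for all $J\in V$.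
   Context: $\mathbb H$ denotes the quaternions with standard inner product, $L_q,R_q$ left and right multiplication by $q$, and $\mathrm{diag}$ denotes block-diagonal operators on $\mathbb H^p$ acting coordinatewise. For a Euclidean space $\mathfrak a$, a subspace $V\subset\mathfrak{so}(\mathfrak a)$ with inner product $\langle\cdot,\cdot\rangle$ defines the metric 2-step nilpotent Lie algebra $\mathfrak n=V\oplus\mathfrak a$ (orthogonal sum, $V$ central, $\langle J,[X,Y]\rangle=\langle JX,Y\rangle$). It is a WS-pair if the corresponding simply connected nilpotent Lie group with left-invariant metric is weakly symmetric. Standing fact: this holds iff for every $J\in V$, $X\in\mathfrak a$ there is $N\in\mathcal N(V)=\{N\in O(\mathfrak a): NVN^{-1}\subset V$, $K\mapsto NKN^{-1}$ orthogonal on $(V,\langle\cdot,\cdot\rangle)\}$ with $NX=-X$, $NJ=-JN$. *)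

From mathcomp Require Import all_boot all_order all_algebra.
From mathcomp Require Import reals.
Set Implicit Arguments. Unset Strict Implicit. Unset Printing Implicit Defensive.
Import Order.TTheory GRing.Theory Num.Theory.
Local Open Scope ring_scope.

Section Quaternions.
Variable R : realType.

Record quat := Quat { qre : R; qi : R; qj : R; qk : R }.

Definition qadd (x y : quat) : quat :=
  Quat (qre x + qre y) (qi x + qi y) (qj x + qj y) (qk x + qk y).
Definition qopp (x : quat) : quat := Quat (- qre x) (- qi x) (- qj x) (- qk x).
Definition qscale (c : R) (x : quat) : quat :=
  Quat (c * qre x) (c * qi x) (c * qj x) (c * qk x).
Definition qzero : quat := Quat 0 0 0 0.

Definition qmul (x y : quat) : quat :=
  Quat (qre x * qre y - qi x * qi y - qj x * qj y - qk x * qk y)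
       (qre x * qi y + qi x * qre y + qj x * qk y - qk x * qj y)
       (qre x * qj y - qi x * qk y + qj x * qre y + qk x * qi y)
       (qre x * qk y + qi x * qj y - qj x * qi y + qk x * qre y).

Definition qdot (x y : quat) : R :=
  qre x * qre y + qi x * qi y + qj x * qj y + qk x * qk y.
Definition qnorm2 (x : quat) : R := qdot x x.

Definition qconj (x : quat) : quat := Quat (qre x) (- qi x) (- qj x) (- qk x).
Definition qinv (x : quat) : quat := qscale (qnorm2 x)^-1 (qconj x).

Definition is_imag (x : quat) : Prop := qre x = 0.
Definition is_unit_quat (x : quat) : Prop := qnorm2 x = 1.

Definition lin_indep2 (a b : quat) : Prop :=
  forall c d : R, qadd (qscale c a) (qscale d b) = qzero -> c = 0 /\ d = 0.

Definition Hp (p : nat) := 'I_p -> quat.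
Definition Hp_dot p (x y : Hp p) : R := \sum_(s < p) qdot (x s) (y s).
Definition op (p : nat) := Hp p -> Hp p.

Definition diagL p (q : 'I_p -> quat) : op p := fun x s => qmul (q s) (x s).
Definition diagR p (r : 'I_p -> quat) : op p := fun x s => qmul (x s) (r s).

Definition op_comb p (c1 : R) (A : op p) (c2 : R) (B : op p) : op p :=
  fun x s => qadd (qscale c1 (A x s)) (qscale c2 (B x s)).
Definition op_eq p (A B : op p) : Prop := forall x s, A x s = B x s.

Definition in_span2 p (J1 J2 : op p) (J : op p) : Prop :=
  exists c1 c2 : R, op_eq J (op_comb c1 J1 c2 J2).

(** An inner product on the subspace V (given by the predicate inV):
    symmetric, bilinear on V, positive definite on V, and depending
    only on the operators extensionally. *)
Definition inner_product_on p (inV : op p -> Prop) (ip : op p -> op p -> R)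
  : Prop :=
  (forall A B A' B', inV A -> inV B -> op_eq A A' -> op_eq B B' ->
     ip A B = ip A' B') /\
  (forall A B, inV A -> inV B -> ip A B = ip B A) /\
  (forall c1 c2 A B C, inV A -> inV B -> inV C ->
     ip (op_comb c1 A c2 B) C = c1 * ip A C + c2 * ip B C) /\
  (forall A, inV A -> 0 <= ip A A) /\
  (forall A, inV A -> ip A A = 0 -> op_eq A (fun _ _ => qzero)).

Definition orthogonal_with_inv p (N Ninv : op p) : Prop :=
  (forall c1 c2 x y s,
     N (fun t => qadd (qscale c1 (x t)) (qscale c2 (y t))) s
     = qadd (qscale c1 (N x s)) (qscale c2 (N y s))) /\
  (forall x y, Hp_dot (N x) (N y) = Hp_dot x y) /\
  (forall x s, N (Ninv x) s = x s) /\
  (forall x s, Ninv (N x) s = x s).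

Definition conj_op p (N Ninv K : op p) : op p := fun x => N (K (Ninv x)).

Definition in_NV p (inV : op p -> Prop) (ip : op p -> op p -> R) (N : op p)
  : Prop :=
  exists Ninv : op p,
    orthogonal_with_inv N Ninv /\
    (forall K, inV K -> inV (conj_op N Ninv K)) /\
    (forall K L, inV K -> inV L ->
       ip (conj_op N Ninv K) (conj_op N Ninv L) = ip K L).

(** WS-pair, via the standing criterion of the paper: for every J in V and
    X in a there is N in N(V) with N X = -X and N J = -J N. *)
Definition WS_pair p (inV : op p -> Prop) (ip : op p -> op p -> R) : Prop :=
  forall (J : op p) (X : Hp p), inV J ->
    exists N : op p, in_NV inV ip N /\
      (forall s, N X s = qopp (X s)) /\
      (forall x s, N (J x) s = qopp (J (N x) s)).

End Quaternions.

From mathcomp Require Import all_boot all_order all_algebra.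
From mathcomp Require Import reals.
From mathcomp Require Import ring lra.
Import Order.TTheory GRing.Theory Num.Theory.
Local Open Scope ring_scope.
Set Implicit Arguments. Unset Strict Implicit. Unset Printing Implicit Defensive.

(* For each block s take q_s, the normalised cross product of a_s and b_s: a
   unit imaginary quaternion orthogonal to span(a_s, b_s), hence
   anticommuting with it, so that L_{q_s} conjugates every J in V to -J.
   Given X, the unit r_s = X_s^-1 q_s X_s satisfies q_s X_s r_s = q_s^2 X_s
   = -X_s, and right multiplications commute with the left ones in V.  Thus
   N = QP is orthogonal, maps X to -X and conjugates every K in V to -K, which
   preserves V and any inner product on it. *)

Section QuaternionAlgebra.
Variable R : realType.
Implicit Types x y z q r v : quat R.

Definition qone : quat R := Quat 1 0 0 0.
Definition qcomb (c1 : R) x (c2 : R) y : quat R := qadd (qscale c1 x) (qscale c2 y).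

Lemma quat_ext x y :
  qre x = qre y -> qi x = qi y -> qj x = qj y -> qk x = qk y -> x = y.
Proof. by case: x => ????; case: y => ???? /= -> -> -> ->. Qed.

Local Ltac quat_ring :=
  apply: quat_ext; rewrite /= ?/qmul ?/qcomb ?/qadd ?/qscale ?/qopp /=; ring.

Lemma qmulA x y z : qmul x (qmul y z) = qmul (qmul x y) z.
Proof. case: x y z => [????] [????] [????]; quat_ring. Qed.

Lemma qmulNl x y : qmul (qopp x) y = qopp (qmul x y).
Proof. case: x y => [????] [????]; quat_ring. Qed.

Lemma qmul1l x : qmul qone x = x.
Proof. case: x => [????]; quat_ring. Qed.

Lemma qmul1r x : qmul x qone = x.
Proof. case: x => [????]; quat_ring. Qed.

Lemma qmul0r x : qmul x (qzero R) = qzero R.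
Proof. case: x => [????]; quat_ring. Qed.

Lemma qopp0 : qopp (qzero R) = qzero R.
Proof. quat_ring. Qed.

Lemma qmul_combl c1 c2 x y z :
  qmul (qcomb c1 x c2 y) z = qcomb c1 (qmul x z) c2 (qmul y z).
Proof. case: x y z => [????] [????] [????]; quat_ring. Qed.

Lemma qmul_combr c1 c2 x y z :
  qmul z (qcomb c1 x c2 y) = qcomb c1 (qmul z x) c2 (qmul z y).
Proof. case: x y z => [????] [????] [????]; quat_ring. Qed.

Lemma qopp_comb c1 c2 x y : qopp (qcomb c1 x c2 y) = qcomb (- c1) x (- c2) y.
Proof. case: x y => [????] [????]; quat_ring. Qed.

Lemma qcomb_opp x : qcomb (-1) x 0 x = qopp x.
Proof. case: x => [????]; quat_ring. Qed.

Lemma is_imag_comb c1 c2 x y : is_imag x -> is_imag y -> is_imag (qcomb c1 x c2 y).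
Proof. by rewrite /is_imag /= => -> ->; rewrite !mulr0 addr0. Qed.

Lemma qdot_comb c1 c2 q x y :
  qdot q (qcomb c1 x c2 y) = c1 * qdot q x + c2 * qdot q y.
Proof. case: q x y => [????] [????] [????]; rewrite /qdot /=; ring. Qed.

Lemma qdotZl c x y : qdot (qscale c x) y = c * qdot x y.
Proof. case: x y => [????] [????]; rewrite /qdot /=; ring. Qed.

Lemma qnorm2Z c x : qnorm2 (qscale c x) = c ^+ 2 * qnorm2 x.
Proof. case: x => [????]; rewrite /qnorm2 /qdot /=; ring. Qed.

Lemma qnorm2M x y : qnorm2 (qmul x y) = qnorm2 x * qnorm2 y.
Proof. case: x y => [????] [????]; rewrite /qnorm2 /qdot /=; ring. Qed.

Lemma qdot_mul2l q x y : qdot (qmul q x) (qmul q y) = qnorm2 q * qdot x y.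
Proof. case: q x y => [????] [????] [????]; rewrite /qnorm2 /qdot /=; ring. Qed.

Lemma qdot_mul2r r x y : qdot (qmul x r) (qmul y r) = qdot x y * qnorm2 r.
Proof. case: r x y => [????] [????] [????]; rewrite /qnorm2 /qdot /=; ring. Qed.

Lemma qnorm2_ge0 x : 0 <= qnorm2 x.
Proof. case: x => ????; rewrite /qnorm2 /qdot /=; nra. Qed.

Lemma qnorm2_eq0 x : qnorm2 x = 0 -> x = qzero R.
Proof. by case: x => ????; rewrite /qnorm2 /qdot /= => h; apply: quat_ext => /=; nra. Qed.

Lemma qmulV x : qnorm2 x != 0 -> qmul x (qinv x) = qone /\ qmul (qinv x) x = qone.
Proof.
case: x => ????; rewrite /qinv /qnorm2 /qdot /=; set n := _ + _ + _ + _ => n0.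
have nVn : n^-1 * n = 1 by rewrite mulVf.
by split; apply: quat_ext; rewrite /= -?nVn /n; ring.
Qed.

Lemma qnorm2V x : qnorm2 x != 0 -> qnorm2 (qinv x) = (qnorm2 x)^-1.
Proof.
case: x => ????; rewrite /qinv /qnorm2 /qdot /=; set n := _ + _ + _ + _ => n0.
transitivity (n^-1 * n^-1 * n); first by rewrite /n; ring.
by rewrite -mulrA mulVf // mulr1.
Qed.

Lemma qmulV_unit x : is_unit_quat x -> qmul x (qinv x) = qone /\ qmul (qinv x) x = qone.
Proof. by move=> x1; apply: qmulV; rewrite x1 oner_neq0. Qed.

(* Orthogonal imaginary quaternions anticommute: their product is their cross product. *)
Lemma qmul_anticomm q v :
  is_imag q -> is_imag v -> qdot q v = 0 -> qmul q v = qopp (qmul v q).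
Proof.
case: q v => [????] [????]; rewrite /is_imag /qdot /= => -> -> qv0.
by apply: quat_ext => /=; lra.
Qed.

Lemma qmul_imag_unit_sqr q : is_imag q -> is_unit_quat q -> qmul q q = qopp qone.
Proof.
case: q => ????; rewrite /is_imag /is_unit_quat /qnorm2 /qdot /= => -> q1.
by apply: quat_ext => /=; lra.
Qed.

Lemma qconj_by_orth q v x : is_imag q -> is_unit_quat q -> is_imag v -> qdot q v = 0 ->
  qmul q (qmul v (qmul (qinv q) x)) = qopp (qmul v x).
Proof.
move=> q_imag q1 v_imag qv0.
rewrite qmulA (qmul_anticomm q_imag v_imag qv0) qmulNl -!qmulA.
by rewrite [qmul q (qmul _ _)]qmulA (qmulV_unit q1).1 qmul1l.
Qed.

Definition qconj_by x q : quat R :=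
  if qnorm2 x == 0 then qone else qmul (qinv x) (qmul q x).

Lemma qconj_by_unit x q : is_unit_quat q -> is_unit_quat (qconj_by x q).
Proof.
rewrite /is_unit_quat /qconj_by => q1; case: eqP => [_|/eqP x0].
  by rewrite /qnorm2 /qdot /=; ring.
by rewrite !qnorm2M qnorm2V // q1 mul1r mulVf.
Qed.

Lemma qmul_conj_by x q : is_imag q -> is_unit_quat q ->
  qmul (qmul q x) (qconj_by x q) = qopp x.
Proof.
move=> q_imag q1; rewrite /qconj_by; case: eqP => [/qnorm2_eq0 ->|/eqP x0].
  by rewrite qmul0r qmul1r qopp0.
rewrite -qmulA [qmul x _]qmulA (qmulV x0).1 qmul1l qmulA.
by rewrite qmul_imag_unit_sqr // qmulNl qmul1l.
Qed.

Definition qcross x y : quat R :=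
  Quat 0 (qj x * qk y - qk x * qj y) (qk x * qi y - qi x * qk y)
         (qi x * qj y - qj x * qi y).

Lemma qdot_crossl x y : is_imag x -> qdot (qcross x y) x = 0.
Proof. by case: x y => [????] [????]; rewrite /is_imag /qdot /= => ->; ring. Qed.

Lemma qdot_crossr x y : is_imag y -> qdot (qcross x y) y = 0.
Proof. by case: x y => [????] [????]; rewrite /is_imag /qdot /= => ->; ring. Qed.

Lemma qcross_x0 x : qcross x (qzero R) = qzero R.
Proof. apply: quat_ext => /=; ring. Qed.

Lemma qcross_crossr x y : is_imag x -> is_imag y ->
  qcross x (qcross x y) = qcomb (qdot x y) x (- qnorm2 x) y.
Proof.
case: x y => [????] [????]; rewrite /is_imag /qnorm2 /qdot => /= -> ->.
apply: quat_ext => /=; ring.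
Qed.

Lemma qcross_neq0 x y : is_imag x -> is_imag y -> lin_indep2 x y ->
  qnorm2 (qcross x y) != 0.
Proof.
move=> x_imag y_imag xy_indep; apply/negP => /eqP /qnorm2_eq0 xy0.
have /xy_indep [_ /eqP] : qcomb (qdot x y) x (- qnorm2 x) y = qzero R.
  by rewrite -qcross_crossr // xy0 qcross_x0.
rewrite oppr_eq0 => /eqP /qnorm2_eq0 x0.
have /xy_indep [/eqP] : qcomb 1 x 0 y = qzero R.
  by rewrite x0; apply: quat_ext => /=; ring.
by rewrite oner_eq0.
Qed.

Definition qnormalize x : quat R := qscale (Num.sqrt (qnorm2 x))^-1 x.

Lemma qnormalize_unit x : qnorm2 x != 0 -> is_unit_quat (qnormalize x).
Proof.
by move=> x0; rewrite /is_unit_quat qnorm2Z exprVn sqr_sqrtr ?qnorm2_ge0 // mulVf.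
Qed.

Lemma qnormalize_imag x : is_imag x -> is_imag (qnormalize x).
Proof. by rewrite /is_imag /= => ->; rewrite mulr0. Qed.

End QuaternionAlgebra.

Section SpanOfDiagonals.
Variables (R : realType) (p : nat).
Implicit Types (a b q r : 'I_p -> quat R) (J K : op R p).

Lemma in_span2_diagL a b J : in_span2 (diagL a) (diagL b) J ->
  exists c1 c2, forall x s, J x s = qmul (qcomb c1 (a s) c2 (b s)) (x s).
Proof.
by case=> c1 [c2 eqJ]; exists c1, c2 => x s; rewrite eqJ qmul_combl.
Qed.

Lemma orthogonal_diagRL q r :
  (forall s, is_unit_quat (q s)) -> (forall s, is_unit_quat (r s)) ->
  orthogonal_with_inv (fun x => diagR r (diagL q x))
    (fun x => diagL (fun s => qinv (q s)) (diagR (fun s => qinv (r s)) x)).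
Proof.
move=> q1 r1; rewrite /diagR /diagL; split; [|split; [|split]].
- by move=> c1 c2 x y s; rewrite -[qadd _ _]/(qcomb _ _ _ _) qmul_combr qmul_combl.
- move=> x y; apply: eq_bigr => s _.
  by rewrite qdot_mul2r qdot_mul2l q1 r1 mul1r mulr1.
- move=> x s; rewrite qmulA (qmulV_unit (q1 s)).1 qmul1l -qmulA.
  by rewrite (qmulV_unit (r1 s)).2 qmul1r.
- move=> x s; rewrite -qmulA (qmulV_unit (r1 s)).1 qmul1r qmulA.
  by rewrite (qmulV_unit (q1 s)).2 qmul1l.
Qed.

Definition op_opp K : op R p := op_comb (-1) K 0 K.

Lemma in_span2_opp J1 J2 K : in_span2 J1 J2 K -> in_span2 J1 J2 (op_opp K).
Proof.
case=> c1 [c2 eqK]; exists (- c1), (- c2) => x s.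
by rewrite /op_opp /op_comb -[qadd _ _]/(qcomb _ _ _ _) qcomb_opp eqK qopp_comb.
Qed.

Lemma in_NV_of_conj_opp J1 J2 ip N Ninv :
  inner_product_on (in_span2 J1 J2) ip -> orthogonal_with_inv N Ninv ->
  (forall K, in_span2 J1 J2 K -> forall x s, conj_op N Ninv K x s = qopp (K x s)) ->
  in_NV (in_span2 J1 J2) ip N.
Proof.
case=> ip_ext [ip_sym [ip_lin _]] N_orth conj_opp; exists Ninv; split=> //.
have conj_eq_opp K : in_span2 J1 J2 K -> op_eq (conj_op N Ninv K) (op_opp K).
  by move=> VK x s; rewrite conj_opp // /op_opp /op_comb -[qadd _ _]/(qcomb _ _ _ _) qcomb_opp.
have ip_oppl K L : in_span2 J1 J2 K -> in_span2 J1 J2 L -> ip (op_opp K) L = - ip K L.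
  by move=> VK VL; rewrite ip_lin //; ring.
have conjV K : in_span2 J1 J2 K -> in_span2 J1 J2 (conj_op N Ninv K).
  move=> VK; have [c1 [c2 eqK]] := in_span2_opp VK.
  by exists c1, c2 => x s; rewrite conj_eq_opp.
split=> // K L VK VL.
rewrite (ip_ext _ _ _ _ (conjV K VK) (conjV L VL) (conj_eq_opp K VK) (conj_eq_opp L VL)).
have [VKo VLo] := (in_span2_opp VK, in_span2_opp VL).
by rewrite ip_oppl // ip_sym // ip_oppl // opprK ip_sym.
Qed.

End SpanOfDiagonals.

Section OrthogonalImaginaryFactor.
Variables (R : realType) (p : nat) (a b q : 'I_p -> quat R).
Hypotheses (a_imag : forall s, is_imag (a s)) (b_imag : forall s, is_imag (b s)).
Hypotheses (q_imag : forall s, is_imag (q s)) (q_unit : forall s, is_unit_quat (q s)).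
Hypotheses (qa0 : forall s, qdot (q s) (a s) = 0) (qb0 : forall s, qdot (q s) (b s) = 0).

Local Notation V := (in_span2 (diagL a) (diagL b)).

Let comb_imag c1 c2 s : is_imag (qcomb c1 (a s) c2 (b s)).
Proof. exact: is_imag_comb. Qed.

Let q_orth_comb c1 c2 s : qdot (q s) (qcomb c1 (a s) c2 (b s)) = 0.
Proof. by rewrite qdot_comb qa0 qb0 !mulr0 addr0. Qed.

Lemma diagL_conj_span_opp J : V J ->
  forall x s, diagL q (J (diagL (fun t => qinv (q t)) x)) s = qopp (J x s).
Proof.
case/in_span2_diagL=> c1 [c2 eqJ] x s; rewrite /diagL !eqJ.
exact: qconj_by_orth.
Qed.

Lemma diagRL_anticomm_span r J : V J ->
  forall x s, diagR r (diagL q (J x)) s = qopp (J (diagR r (diagL q x)) s).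
Proof.
case/in_span2_diagL=> c1 [c2 eqJ] x s; rewrite /diagR /diagL !eqJ.
rewrite qmulA (qmul_anticomm (q_imag s) (comb_imag c1 c2 s) (q_orth_comb c1 c2 s)).
by rewrite !qmulNl !qmulA.
Qed.

Lemma diagRL_in_NV ip r : inner_product_on V ip ->
  (forall s, is_unit_quat (r s)) -> in_NV V ip (fun x => diagR r (diagL q x)).
Proof.
move=> ip_V r_unit; have N_orth := orthogonal_diagRL q_unit r_unit.
apply: (in_NV_of_conj_opp ip_V N_orth) => K VK x s.
have [c1 [c2 eqK]] := in_span2_diagL VK.
rewrite /conj_op diagRL_anticomm_span // !eqK.
by have [_ [_ [-> _]]] := N_orth.
Qed.

End OrthogonalImaginaryFactor.

Theorem mainTheorem3 (R : realType) (p : nat) (a b : 'I_p -> quat R)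
  (ha : forall s, is_imag (a s)) (hb : forall s, is_imag (b s))
  (hab : forall s, lin_indep2 (a s) (b s))
  (ip : op R p -> op R p -> R)
  (hip : inner_product_on (in_span2 (diagL a) (diagL b)) ip) :
  WS_pair (in_span2 (diagL a) (diagL b)) ip /\
  exists q : 'I_p -> quat R,
    (forall s, is_imag (q s) /\ is_unit_quat (q s)) /\
    (forall J, in_span2 (diagL a) (diagL b) J ->
       forall x s, diagL q (J (diagL (fun t => qinv (q t)) x)) s
                   = qopp (J x s)) /\
    (forall X : Hp R p, exists r : 'I_p -> quat R,
       (forall s, is_unit_quat (r s)) /\
       (forall s, diagR r (diagL q X) s = qopp (X s)) /\
       (forall J, in_span2 (diagL a) (diagL b) J ->
          forall x s, diagR r (diagL q (J x)) s
                      = qopp (J (diagR r (diagL q x)) s))).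
Proof.
pose q s := qnormalize (qcross (a s) (b s)).
have q_imag s : is_imag (q s) by apply: qnormalize_imag.
have q_unit s : is_unit_quat (q s).
  exact/qnormalize_unit/(qcross_neq0 (ha s) (hb s) (hab s)).
have qa0 s : qdot (q s) (a s) = 0 by rewrite qdotZl (qdot_crossl (b s) (ha s)) mulr0.
have qb0 s : qdot (q s) (b s) = 0 by rewrite qdotZl (qdot_crossr (a s) (hb s)) mulr0.
pose r (X : Hp R p) s := qconj_by (X s) (q s).
have r_unit X s : is_unit_quat (r X s) by apply: qconj_by_unit.
have N_flips X s : diagR (r X) (diagL q X) s = qopp (X s) by apply: qmul_conj_by.
have N_anticomm X := diagRL_anticomm_span ha hb q_imag qa0 qb0 (r X).
split.
  move=> J X VJ; exists (fun x => diagR (r X) (diagL q x)).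
  split; first exact: (diagRL_in_NV ha hb q_imag q_unit qa0 qb0 hip).
  by split; [exact: N_flips | exact: N_anticomm].
exists q; split=> //; split.
  exact: (diagL_conj_span_opp ha hb q_imag q_unit qa0 qb0).
move=> X; exists (r X).
by split; [|split; [exact: N_flips | exact: N_anticomm]].
Qed.
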